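(* Let $m\ge0$ be an integer. For each $n\ge0$ and $x\in O$: (1) $\mathcal{D}_n(x)^{q^m}=\sum_{i=0}^\infty[m]^i\binom{i+n}{n}\mathcal{D}_{i+n}(x)$; (2) $\mathcal{D}_n(x)=\sum_{i=0}^\infty(-[m])^i\binom{i+n}{n}\mathcal{D}_{i+n}(x)^{q^m}$.
   Context: Let $q$ be a prime power, $O=\mathbf{F}_q[[T]]$ with the $T$-adic topology. Put $[m]=T^{q^m}-T$. Hasse derivatives: $\mathcal{D}_n(\sum_ia_iT^i)=\sum_i\binom{i}{n}a_iT^{i-n}$; all binomial coefficients are read in $\mathbf{F}_q$. *)

From mathcomp Require Import all_boot all_algebra all_field.
Set Implicit Arguments. Unset Strict Implicit. Unset Printing Implicit Defensive.
Import GRing.Theory.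
Local Open Scope ring_scope.

(* Formal power series O = F[[T]] over a finite field F (q := #|F|),
   represented by their coefficient sequences: x k = coefficient of T^k. *)
Definition ps (F : finFieldType) := nat -> F.

Section PS.
Variable F : finFieldType.

Definition ps_add (a b : ps F) : ps F := fun k => a k + b k.
Definition ps_opp (a : ps F) : ps F := fun k => - a k.
Definition ps_scale (c : F) (a : ps F) : ps F := fun k => c * a k.
Definition ps_mul (a b : ps F) : ps F :=
  fun k => \sum_(i < k.+1) a i * b (k - i)%N.
Definition ps_one : ps F := fun k => (k == 0%N)%:R.
Definition ps_exp (a : ps F) (e : nat) : ps F := iter e (ps_mul a) ps_one.

Definition ps_Tpow (e : nat) : ps F := fun k => (k == e)%:R.

Definition bracket (m : nat) : ps F :=
  ps_add (ps_Tpow (#|F| ^ m)) (ps_opp (ps_Tpow 1)).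

(* Hasse derivative: D_n (sum_i a_i T^i) = sum_i C(i,n) a_i T^(i-n);
   coefficient of T^k is C(k+n,n) a_(k+n). *)
Definition hasse (n : nat) (x : ps F) : ps F :=
  fun k => ('C(k + n, n))%:R * x (k + n)%N.

(* T-adic convergence of the series sum_i a i to s: for every K there is N
   such that every partial sum sum_(i<M), M >= N, agrees with s modulo T^K. *)
Definition ps_series_eq (a : nat -> ps F) (s : ps F) : Prop :=
  forall K : nat, exists N : nat, forall M : nat, (N <= M)%N ->
    forall k : nat, (k < K)%N -> \sum_(i < M) a i k = s k.

End PS.

From mathcomp Require Import all_boot all_algebra all_field all_solvable.
From mathcomp Require Import zify.
From Stdlib Require Import FunctionalExtensionality.
Set Implicit Arguments. Unset Strict Implicit. Unset Printing Implicit Defensive.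
Import GRing.Theory.
Local Open Scope ring_scope.

(* The truncation of x at a high enough T-adic order is a polynomial P, and the
   coefficient of T^k on either side only sees that truncation, because [m] is
   divisible by T.  For a polynomial Q over F, raising to the power q^m fixes the
   coefficients, so Q^(q^m) = Q(T^(q^m)) = Q(T + [m]) and Q = Q(T^(q^m) - [m]).
   Taylor expansion with Hasse derivatives gives
     Q^(q^m) = sum_i [m]^i D_i Q   and   Q = sum_i (-[m])^i (D_i Q)^(q^m),
   and for Q = D_n P the rule D_i D_n = C(i+n, n) D_(i+n) yields (1) and (2). *)

Lemma mul_bin_bin a b c :
  ('C(a + b + c, c) * 'C(a + b, b) = 'C(b + c, c) * 'C(a + b + c, b + c))%N.
Proof.
have fact_abc : (0 < a`! * b`! * c`!)%N by rewrite !muln_gt0 !fact_gt0.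
apply/eqP; rewrite -(eqn_pmul2r fact_abc); apply/eqP.
(* both sides times [a`! * b`! * c`!] are equal to [(a + b + c)`!] *)
have := bin_fact (leq_addl (a + b) c).
rewrite addnK -(bin_fact (leq_addl a b)) addnK.
have := bin_fact (leq_addl a (b + c)).
rewrite addnK addnA -(bin_fact (leq_addl b c)) addnK.
lia.
Qed.

Lemma nderivn_nderivn (R : nzRingType) (p : {poly R}) i n :
  p^`N(n)^`N(i) = 'C(i + n, n)%:R *: p^`N(i + n).
Proof.
apply/polyP => j; rewrite coefZ !coef_nderivn mulr_natl -!mulrnA.
by rewrite (addnC n) (addnC i j) mul_bin_bin mulnC -addnA [(j + _)%N]addnC.
Qed.

Lemma comp_poly_taylor (R : comNzRingType) (p q h : {poly R}) S :
  (size p <= S)%N -> p \Po (q + h) = \sum_(i < S) h ^+ i * (p^`N(i) \Po q).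
Proof.
move=> le_p_S; rewrite /comp_poly (nderiv_taylor_wide (n := S) (mulrC q h)).
  by apply: eq_bigr => i _; rewrite nderivn_map mulrC.
by rewrite size_map_polyC.
Qed.

Lemma coef_expXM_small (R : comNzRingType) (g r : {poly R}) i j :
  (j < i)%N -> (('X * g) ^+ i * r)`_j = 0.
Proof. by move=> lt_j_i; rewrite exprMn -mulrA coefXnM lt_j_i. Qed.

Lemma coef_sum_expXM (R : comNzRingType) (g : {poly R}) (f : nat -> {poly R}) S k :
  (k < S)%N ->
  (\sum_(i < S) ('X * g) ^+ i * f i)`_k = \sum_(i < k.+1) (('X * g) ^+ i * f i)`_k.
Proof.
move=> lt_k_S; rewrite coef_sum -(subnKC lt_k_S) big_split_ord /=.
by rewrite [X in _ + X]big1 ?addr0 // => i _; rewrite coef_expXM_small ?ltnS ?leq_addr.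
Qed.

Section FrobeniusPoly.
Variables (F : finFieldType) (m : nat).
Local Notation qm := (#|F| ^ m)%N.

Lemma card_expn_gt0 : (0 < qm)%N.
Proof. by rewrite expn_gt0 (ltn_trans _ (finNzRing_gt1 F)). Qed.

Lemma expf_card_expn (c : F) : c ^+ qm = c.
Proof. by elim: m => [|k IHk]; rewrite ?expr1 // expnSr exprM IHk expf_card. Qed.

Lemma pnat_pchar_poly_card_expn : [pchar {poly F}].-nat qm.
Proof.
have [p p_pr pcharFp] := finPcharP F.
rewrite (eq_pnat _ (@pchar_poly F)) (eq_pnat _ (pcharf_eq pcharFp)) pnatX.
by have := pprimeChar_pgroup pcharFp; rewrite /pgroup cardsT => ->.
Qed.

Lemma exp_card_expn_poly (p : {poly F}) : p ^+ qm = p \Po 'X^qm.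
Proof.
elim/poly_ind: p => [|p c IHp].
  by rewrite comp_poly0 expr0n gtn_eqF ?card_expn_gt0.
rewrite comp_poly_MXaddC exprDn_pchar ?pnat_pchar_poly_card_expn //.
by rewrite exprMn IHp -polyC_exp expf_card_expn.
Qed.

Definition bracket_poly : {poly F} := 'X^qm - 'X.

Lemma bracket_polyE : bracket_poly = 'X * ('X^(qm.-1) - 1).
Proof. by rewrite mulrBr mulr1 -exprS prednK ?card_expn_gt0. Qed.

Lemma exp_card_expn_taylor (p : {poly F}) S : (size p <= S)%N ->
  p ^+ qm = \sum_(i < S) bracket_poly ^+ i * p^`N(i).
Proof.
move=> le_p_S; rewrite exp_card_expn_poly.
have -> : 'X^qm = 'X + bracket_poly by rewrite addrC subrK.
rewrite (comp_poly_taylor _ _ le_p_S).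
by under eq_bigr do rewrite comp_polyXr.
Qed.

Lemma taylor_nderivn_exp_card_expn (p : {poly F}) S : (size p <= S)%N ->
  p = \sum_(i < S) (- bracket_poly) ^+ i * p^`N(i) ^+ qm.
Proof.
move=> le_p_S; rewrite -[p in LHS]comp_polyXr.
have -> : 'X = 'X^qm - bracket_poly by rewrite opprB addrC subrK.
rewrite (comp_poly_taylor _ _ le_p_S).
by under eq_bigr do rewrite -exp_card_expn_poly.
Qed.

Lemma coef_exp_card_expn (p : {poly F}) k :
  (p ^+ qm)`_k = \sum_(i < k.+1) (bracket_poly ^+ i * p^`N(i))`_k.
Proof.
rewrite (exp_card_expn_taylor (S := k.+1 + size p)) ?leq_addl // bracket_polyE.
by rewrite (coef_sum_expXM _ (fun i => p^`N(i))) ?leq_addr.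
Qed.

Lemma coef_taylor_nderivn_exp_card_expn (p : {poly F}) k :
  p`_k = \sum_(i < k.+1) ((- bracket_poly) ^+ i * p^`N(i) ^+ qm)`_k.
Proof.
rewrite [p in LHS](taylor_nderivn_exp_card_expn (S := k.+1 + size p)) ?leq_addl //.
by rewrite bracket_polyE -mulrN (coef_sum_expXM _ (fun i => p^`N(i) ^+ qm)) ?leq_addr.
Qed.

End FrobeniusPoly.

Section PowerSeriesOfPoly.
Variable F : finFieldType.

Definition ps_of_poly (p : {poly F}) : ps F := fun k => p`_k.

Lemma ps_of_polyM p q : ps_mul (ps_of_poly p) (ps_of_poly q) = ps_of_poly (p * q).
Proof. by apply: functional_extensionality => k; rewrite /ps_of_poly coefM. Qed.

Lemma ps_of_polyX p i : ps_exp (ps_of_poly p) i = ps_of_poly (p ^+ i).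
Proof.
elim: i => [|i IHi].
  by apply: functional_extensionality => -[|k]; rewrite /ps_of_poly coefC.
by rewrite /ps_exp iterS -/(ps_exp _ i) IHi ps_of_polyM exprS.
Qed.

Lemma ps_of_polyN p : ps_opp (ps_of_poly p) = ps_of_poly (- p).
Proof. by apply: functional_extensionality => k; rewrite /ps_opp /ps_of_poly coefN. Qed.

Lemma ps_of_polyZ c p : ps_scale c (ps_of_poly p) = ps_of_poly (c *: p).
Proof. by apply: functional_extensionality => k; rewrite /ps_scale /ps_of_poly coefZ. Qed.

Lemma hasse_ps_of_poly n p : hasse n (ps_of_poly p) = ps_of_poly p^`N(n).
Proof.
apply: functional_extensionality => k.
by rewrite /hasse /ps_of_poly coef_nderivn addnC mulr_natl.
Qed.

Lemma bracket_ps_of_poly m : bracket F m = ps_of_poly (bracket_poly F m).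
Proof.
apply: functional_extensionality => k.
by rewrite /bracket /ps_add /ps_opp /ps_Tpow /ps_of_poly coefB coefXn coefX.
Qed.

End PowerSeriesOfPoly.

Section PowerSeriesCongruence.
Variable F : finFieldType.
Implicit Types (a b x y : ps F) (N : nat).

Definition ps_eqmod N a b := forall k, (k < N)%N -> a k = b k.

Lemma ps_eqmod_mul N a a' b b' :
  ps_eqmod N a a' -> ps_eqmod N b b' -> ps_eqmod N (ps_mul a b) (ps_mul a' b').
Proof.
move=> eq_a eq_b k lt_k_N; apply: eq_bigr => i _.
have le_i_k : (i <= k)%N by rewrite -ltnS.
by rewrite eq_a ?eq_b // (leq_ltn_trans _ lt_k_N) ?leq_subr.
Qed.

Lemma ps_eqmod_exp N a a' i : ps_eqmod N a a' -> ps_eqmod N (ps_exp a i) (ps_exp a' i).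
Proof.
by move=> eq_a; elim: i => [|i IHi] //; rewrite /ps_exp !iterS; apply: ps_eqmod_mul.
Qed.

Lemma ps_eqmod_scale N c a a' :
  ps_eqmod N a a' -> ps_eqmod N (ps_scale c a) (ps_scale c a').
Proof. by move=> eq_a k lt_k_N; rewrite /ps_scale eq_a. Qed.

Lemma ps_eqmod_hasse N j x y : ps_eqmod (N + j) x y -> ps_eqmod N (hasse j x) (hasse j y).
Proof. by move=> eq_xy k lt_k_N; rewrite /hasse eq_xy // ltn_add2r. Qed.

Lemma ps_eqmod_hasse_trunc N J j x : (j <= J)%N ->
  ps_eqmod N (hasse j x) (hasse j (ps_of_poly (\poly_(i < N + J) x i))).
Proof.
move=> le_j_J; apply: ps_eqmod_hasse => k lt_k; rewrite /ps_of_poly coef_poly.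
by rewrite (leq_trans lt_k) // leq_add2l.
Qed.

Lemma ps_mul_small a b i k :
  (forall j, (j < i)%N -> a j = 0) -> (k < i)%N -> ps_mul a b k = 0.
Proof.
move=> a_small lt_k_i; apply: big1 => j _; rewrite a_small ?mul0r //.
by rewrite (leq_ltn_trans _ lt_k_i) // -ltnS.
Qed.

Lemma ps_series_eq_coef (a : nat -> ps F) s :
  (forall i k, (k < i)%N -> a i k = 0) ->
  (forall k, \sum_(i < k.+1) a i k = s k) -> ps_series_eq a s.
Proof.
move=> a_small sum_a K; exists K => M le_K_M k lt_k_K.
rewrite -(subnKC (leq_trans lt_k_K le_K_M)) big_split_ord /=.
by rewrite [X in _ + X]big1 ?addr0 ?sum_a // => i _; rewrite a_small ?ltnS ?leq_addr.
Qed.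

End PowerSeriesCongruence.

Section HasseFrobenius.
Variables (F : finFieldType) (m n : nat).
Local Notation qm := (#|F| ^ m)%N.

Lemma bracket_exp_small i k : (k < i)%N -> ps_exp (bracket F m) i k = 0.
Proof.
move=> lt_k_i; rewrite bracket_ps_of_poly ps_of_polyX /ps_of_poly bracket_polyE.
by rewrite -[_ ^+ i]mulr1 coef_expXM_small.
Qed.

Lemma opp_bracket_exp_small i k : (k < i)%N -> ps_exp (ps_opp (bracket F m)) i k = 0.
Proof.
move=> lt_k_i; rewrite bracket_ps_of_poly ps_of_polyN ps_of_polyX /ps_of_poly.
by rewrite bracket_polyE -mulrN -[_ ^+ i]mulr1 coef_expXM_small.
Qed.

Lemma frobenius_hasse_series x :
  ps_series_eq
    (fun i => ps_mul (ps_exp (bracket F m) i)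
                     (ps_scale ('C(i + n, n))%:R (hasse (i + n) x)))
    (ps_exp (hasse n x) qm).
Proof.
apply: ps_series_eq_coef => [i k lt_k_i | k].
  by apply: ps_mul_small lt_k_i => j; apply: bracket_exp_small.
set P := \poly_(i < k.+1 + (k + n)) x i.
have eq_xP j : (j <= k + n)%N -> ps_eqmod k.+1 (hasse j x) (hasse j (ps_of_poly P)).
  exact: ps_eqmod_hasse_trunc.
rewrite [RHS](ps_eqmod_exp qm (eq_xP n (leq_addl _ _))) //.
rewrite hasse_ps_of_poly ps_of_polyX /ps_of_poly coef_exp_card_expn.
apply: eq_bigr => i _; rewrite nderivn_nderivn.
have le_in : (i + n <= k + n)%N by rewrite leq_add2r -ltnS.
rewrite (ps_eqmod_mul (a' := ps_exp (bracket F m) i) _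
          (ps_eqmod_scale _ (eq_xP _ le_in))) //.
by rewrite hasse_ps_of_poly ps_of_polyZ bracket_ps_of_poly ps_of_polyX ps_of_polyM.
Qed.

Lemma inverse_frobenius_hasse_series x :
  ps_series_eq
    (fun i => ps_mul (ps_exp (ps_opp (bracket F m)) i)
                     (ps_scale ('C(i + n, n))%:R (ps_exp (hasse (i + n) x) qm)))
    (hasse n x).
Proof.
apply: ps_series_eq_coef => [i k lt_k_i | k].
  by apply: ps_mul_small lt_k_i => j; apply: opp_bracket_exp_small.
set P := \poly_(i < k.+1 + (k + n)) x i.
have eq_xP j : (j <= k + n)%N -> ps_eqmod k.+1 (hasse j x) (hasse j (ps_of_poly P)).
  exact: ps_eqmod_hasse_trunc.
rewrite [RHS](eq_xP n (leq_addl _ _)) //.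
rewrite hasse_ps_of_poly /ps_of_poly (coef_taylor_nderivn_exp_card_expn m).
apply: eq_bigr => i _; rewrite nderivn_nderivn exprZn expf_card_expn.
have le_in : (i + n <= k + n)%N by rewrite leq_add2r -ltnS.
rewrite (ps_eqmod_mul (a' := ps_exp (ps_opp (bracket F m)) i) _
          (ps_eqmod_scale _ (ps_eqmod_exp _ (eq_xP _ le_in)))) //.
rewrite hasse_ps_of_poly ps_of_polyX ps_of_polyZ bracket_ps_of_poly ps_of_polyN.
by rewrite ps_of_polyX ps_of_polyM.
Qed.

End HasseFrobenius.

Theorem proposition5 (F : finFieldType) (m n : nat) (x : ps F) :
  ps_series_eq
    (fun i => ps_mul (ps_exp (bracket F m) i)
                     (ps_scale ('C(i + n, n))%:R (hasse (i + n) x)))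
    (ps_exp (hasse n x) (#|F| ^ m))
  /\
  ps_series_eq
    (fun i => ps_mul (ps_exp (ps_opp (bracket F m)) i)
                     (ps_scale ('C(i + n, n))%:R
                               (ps_exp (hasse (i + n) x) (#|F| ^ m))))
    (hasse n x).
Proof.
split; [exact: frobenius_hasse_series | exact: inverse_frobenius_hasse_series].
Qed.
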